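(* For a compact $Q\subseteq\mathbb{R}^n_\infty$, $Q$ is injective if and only if $Q=\mathcal{E}(Q)$. In addition, for every compact $X\subseteq\mathbb{R}^n_\infty$, $\mathcal{E}(X)$ is injective.
   Context: $\mathbb{R}^n_\infty$ is $\mathbb{R}^n$ with the $\ell^\infty$-metric $d_\infty$. For $X\subseteq\mathbb{R}^n_\infty$, $\mathcal{E}(X)$ (the set of $X$-minimal points) is the set of $z\in\mathbb{R}^n$ such that for every $x\in X$ there exists $y\in X$ with $d_\infty(x,z)+d_\infty(z,y)=d_\infty(x,y)$, with the metric $d_\infty$. A metric space $E$ is injective if for every isometric embedding $Y\hookrightarrow\tilde Y$ and every 1-Lipschitz $f:Y\to E$ there exists a 1-Lipschitz $\tilde f:\tilde Y\to E$ extending $f$. *)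

(* R^n_oo is modelled as 'rV[R]_n, whose canonical
   norm in MathComp-Analysis is mx_norm = max_i |x_i|, i.e. the l^oo norm;
   its topology is the (product = l^oo) topology of 'rV[R]_n. *)
From HB Require Import structures.
From mathcomp Require Import all_boot all_order all_algebra.
From mathcomp Require Import all_classical all_reals all_analysis.
Set Implicit Arguments. Unset Strict Implicit. Unset Printing Implicit Defensive.
Import Order.TTheory GRing.Theory Num.Theory.
Import numFieldNormedType.Exports.
Local Open Scope classical_set_scope.
Local Open Scope ring_scope.

Definition dinf {R : realType} {n : nat} (x y : 'rV[R]_n) : R := `|x - y|.

Definition is_metric {R : realType} (T : Type) (d : T -> T -> R) : Prop :=
  (forall x y, d x y = 0 <-> x = y) /\
  (forall x y, d x y = d y x) /\
  (forall x y z, d x z <= d x y + d y z).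

Definition Emin {R : realType} {n : nat} (X : set 'rV[R]_n) : set 'rV[R]_n :=
  [set z | forall x, X x -> exists y, X y /\ dinf x z + dinf z y = dinf x y].

Definition injective_space {R : realType} {n : nat} (E : set 'rV[R]_n) : Prop :=
  forall (Y Yt : Type) (dY : Y -> Y -> R) (dYt : Yt -> Yt -> R)
         (i : Y -> Yt) (f : Y -> 'rV[R]_n),
    is_metric dY -> is_metric dYt ->
    (forall a b, dYt (i a) (i b) = dY a b) ->
    (forall a, E (f a)) ->
    (forall a b, dinf (f a) (f b) <= dY a b) ->
    exists g : Yt -> 'rV[R]_n,
      (forall u, E (g u)) /\
      (forall u v, dinf (g u) (g v) <= dYt u v) /\
      (forall a, g (i a) = f a).

From HB Require Import structures.
From mathcomp Require Import all_boot all_order all_algebra.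
From mathcomp Require Import all_classical all_reals all_analysis.
From mathcomp Require Import lra.
Import Order.TTheory GRing.Theory Num.Theory.
Import numFieldNormedType.Exports.
Local Open Scope classical_set_scope.
Local Open Scope ring_scope.

(* An injective space stays injective under 1-Lipschitz retractions, and R^n_oo
   is injective (McShane's extension in each coordinate).  Conversely, if Q is
   injective, a 1-Lipschitz retraction g of R^n_oo onto Q fixes E(Q): for z in
   E(Q) pick y in Q with d(g z, z) + d(z, y) = d(g z, y) <= d(z, y).

   For compact nonempty X we build a 1-Lipschitz retraction onto E(X).  Fix p.
   Starting from d(., p), iterate f |-> (f + f^* )/2, where
   f^*(x) = sup_{y in X} (d(x, y) - f y); this keeps f x + f y >= d(x, y) on X
   and decreases f, and the infimum g_p of the iterates satisfies g_p^* = g_p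
   and depends 1-Lipschitzly on p.  By compactness every x in X has a y in X
   with d(x, y) = g_p x + g_p y, so every z with d(x, z) <= g_p x on X is in
   E(X).  These z form a nonempty box, and the retraction clamps p into it
   coordinatewise; it fixes z in E(X) because then g_z = d(., z) on X. *)

Set Implicit Arguments.
Unset Strict Implicit.
Unset Printing Implicit Defensive.

Section RowNorm.
Variables (R : realDomainType) (n : nat).
Implicit Types x y : 'rV[R]_n.

Lemma row_entry_le_norm x k : `|x ord0 k| <= `|x|.
Proof.
have -> : `|x| = mx_norm x by [].
by rewrite mx_normrE; apply/bigmax_geP; right; exists (ord0, k).
Qed.

Lemma row_norm_le x c : 0 <= c -> (forall k, `|x ord0 k| <= c) -> `|x| <= c.
Proof.
move=> c_ge0 xc; have -> : `|x| = mx_norm x by [].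
by rewrite mx_normrE; apply/bigmax_leP; split=> // -[i j] _; rewrite (ord1 i).
Qed.

Lemma row_entryB_le x y k : x ord0 k - y ord0 k <= `|x - y|.
Proof.
apply: le_trans (ler_norm _) _.
by have := row_entry_le_norm (x - y) k; rewrite !mxE.
Qed.

End RowNorm.

Lemma dist_max_le (R : realDomainType) (s t s' t' c : R) :
  `|s - s'| <= c -> `|t - t'| <= c -> `|Num.max s t - Num.max s' t'| <= c.
Proof.
rewrite !ler_norml => /andP[? ?] /andP[? ?].
by case: (leP s t); case: (leP s' t') => ? ?; apply/andP; split; lra.
Qed.

Lemma dist_min_le (R : realDomainType) (s t s' t' c : R) :
  `|s - s'| <= c -> `|t - t'| <= c -> `|Num.min s t - Num.min s' t'| <= c.
Proof.
rewrite !ler_norml => /andP[? ?] /andP[? ?].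
by case: (leP s t); case: (leP s' t') => ? ?; apply/andP; split; lra.
Qed.

Lemma ler_dist_distB (R : numDomainType) (V : normedZmodType R) (x u v : V) :
  `| `|x - u| - `|x - v| | <= `|u - v|.
Proof.
by apply: le_trans (ler_dist_dist _ _) _; rewrite opprB addrC addrA subrK distrC.
Qed.

Lemma lipschitz_continuous (R : realFieldType) (V W : normedModType R)
    (h : V -> W) (k : R) :
  0 < k -> (forall u v, `|h u - h v| <= k * `|u - v|) -> continuous h.
Proof.
move=> k_gt0 h_lip x; apply/cvgrPdist_le => e e_gt0.
apply/nbhs_normP; exists (e / k) => [|y /= xy]; first by rewrite /= divr_gt0.
by apply: le_trans (h_lip x y) _; rewrite mulrC -ler_pdivlMr // ltW.
Qed.

Section Metric.
Variables (R : realType) (T : Type) (d : T -> T -> R).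
Hypothesis d_metric : is_metric d.

Lemma metric_refl x : d x x = 0.
Proof. by case: d_metric => /(_ x x) [_ ->]. Qed.

Lemma metric_ge0 x y : 0 <= d x y.
Proof.
case: d_metric => _ [dC dtri].
by have := dtri x y x; rewrite (dC y x) metric_refl; lra.
Qed.

End Metric.

Lemma dinf_metric (R : realType) (n : nat) : is_metric (@dinf R n).
Proof.
rewrite /dinf; split; last split.
- move=> x y; split=> [/normr0_eq0/eqP|->]; last by rewrite subrr normr0.
  by rewrite subr_eq0 => /eqP.
- by move=> x y; rewrite distrC.
- by move=> x y z; apply: ler_distD.
Qed.

Section McShane.
Variables (R : realType) (Y Yt : Type) (d : Yt -> Yt -> R) (i : Y -> Yt).
Variables (g : Y -> R) (a0 : Y).
Hypothesis d_metric : is_metric d.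
Hypothesis g_lip : forall a b, g a - g b <= d (i a) (i b).

Definition mcshane u := inf [set g a + d u (i a) | a in [set: Y]].

Lemma has_inf_mcshane u : has_inf [set g a + d u (i a) | a in [set: Y]].
Proof.
case: d_metric => _ [dC dtri].
split; first by exists (g a0 + d u (i a0)); exists a0.
exists (g a0 - d u (i a0)) => _ [a _ <-].
by have := g_lip a0 a; have := dtri (i a0) u (i a); rewrite (dC (i a0) u); lra.
Qed.

Lemma mcshane_le u a : mcshane u <= g a + d u (i a).
Proof. by apply: ge_inf; [case: (has_inf_mcshane u) | exists a]. Qed.

Lemma mcshane_extends b : mcshane (i b) = g b.
Proof.
apply/le_anti/andP; split.
  by have := mcshane_le (i b) b; rewrite metric_refl // addr0.
apply: lb_le_inf; first by exists (g a0 + d (i b) (i a0)); exists a0.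
by move=> _ [a _ <-]; have := g_lip b a; lra.
Qed.

Lemma mcshane_le_add u v : mcshane u <= mcshane v + d u v.
Proof.
case: d_metric => _ [_ dtri].
rewrite -lerBlDr; apply: lb_le_inf; first by exists (g a0 + d v (i a0)); exists a0.
by move=> _ [a _ <-]; have := mcshane_le u a; have := dtri u v (i a); lra.
Qed.

End McShane.

Lemma injective_space_setT (R : realType) (n : nat) :
  injective_space [set: 'rV[R]_n].
Proof.
move=> Y Yt dY dYt i f _ dYt_metric iso _ f_lip.
have [[a0 _]|Y0] := pselect (exists a : Y, True); last first.
  exists (fun=> 0); split=> //; split=> [u v|a]; last by case: Y0; exists a.
  by rewrite /dinf subrr normr0; apply: metric_ge0.
have fk_lip k a b : f a ord0 k - f b ord0 k <= dYt (i a) (i b).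
  by rewrite iso; apply: le_trans (f_lip a b); apply: row_entryB_le.
pose h u : 'rV[R]_n := \row_k mcshane dYt i (fun a => f a ord0 k) u.
exists h; split=> //; split=> [u v|b]; last first.
  by apply/rowP => k; rewrite mxE mcshane_extends.
rewrite /dinf; apply: row_norm_le => [|k]; first exact: metric_ge0.
have := mcshane_le_add a0 dYt_metric (fk_lip k) u v.
have := mcshane_le_add a0 dYt_metric (fk_lip k) v u.
case: dYt_metric => _ [-> _].
by rewrite !mxE ler_norml => ? ?; apply/andP; split; lra.
Qed.

Lemma retract_injective_space (R : realType) (n : nat) (E F : set 'rV[R]_n)
    (r : 'rV[R]_n -> 'rV[R]_n) :
  injective_space F -> E `<=` F -> (forall p, F p -> E (r p)) ->
  (forall p q, F p -> F q -> dinf (r p) (r q) <= dinf p q) ->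
  (forall z, E z -> r z = z) -> injective_space E.
Proof.
move=> injF EF rE r_lip r_id Y Yt dY dYt i f dY_metric dYt_metric iso fE f_lip.
have [g [gF [g_lip gi]]] :=
  injF Y Yt dY dYt i f dY_metric dYt_metric iso (fun a => EF _ (fE a)) f_lip.
exists (r \o g); split=> [u|]; first exact: rE.
split=> [u v|a]; first exact: le_trans (r_lip _ _ (gF u) (gF v)) (g_lip u v).
by rewrite /= gi r_id.
Qed.

Lemma injective_space_Emin_eq (R : realType) (n : nat) (Q : set 'rV[R]_n) :
  injective_space Q -> Q = Emin Q.
Proof.
move=> injQ; pose Y := {x : 'rV[R]_n | Q x}.
have dY_metric : is_metric (fun a b : Y => dinf (sval a) (sval b)).
  have [d0 [dC dtri]] := dinf_metric R n.
  split; last by split=> [a b|a b c]; [apply: dC | apply: dtri].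
  move=> [a Qa] [b Qb] /=; split=> [/d0 ab|[->]]; last exact/d0.
  exact: eq_exist.
have [g [gQ [g_lip gi]]] := injQ Y 'rV[R]_n _ _ sval sval dY_metric
  (dinf_metric R n) (fun _ _ => erefl) (fun a => svalP a) (fun _ _ => lexx _).
apply/seteqP; split=> [z Qz x Qx|z Ez].
  by exists z; split=> //; rewrite /dinf subrr normr0 addr0.
have [y [Qy xzy]] := Ez (g z) (gQ z).
have := g_lip z y; rewrite (gi (exist _ y Qy)) /= => gzy.
have : dinf (g z) z <= 0 by lra.
by rewrite /dinf normr_le0 subr_eq0 => /eqP <-.
Qed.

Section ExtremalFunctions.
Variables (R : realType) (V : normedModType R) (X : set V) (x0 : V).
Hypothesis X0 : X x0.
Implicit Types (f g : V -> R) (x y p q : V).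

Definition dominates_dist f := forall x y, X x -> X y -> `|x - y| <= f x + f y.

Definition star f x := sup [set `|x - y| - f y | y in X].

Definition mid_star f x := (f x + star f x) / 2.

Definition mid_star_iter p k := iter k mid_star (fun x => `|x - p|).

Definition extremal p x := inf (range (mid_star_iter p ^~ x)).

Lemma dominates_dist_ge0 f x : dominates_dist f -> X x -> 0 <= f x.
Proof. by move=> Df Xx; have := Df x x Xx Xx; rewrite subrr normr0; lra. Qed.

Lemma has_sup_star f x y : dominates_dist f -> X y ->
  has_sup [set `|x - w| - f w | w in X].
Proof.
move=> Df Xy; split; first by exists (`|x - y| - f y); exists y.
exists (`|x - y| + f y) => _ [w Xw <-].
by have := Df y w Xy Xw; have := ler_distD y x w; rewrite distrC; lra.
Qed.

Lemma star_ge f x y : dominates_dist f -> X y -> `|x - y| - f y <= star f x.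
Proof. by move=> Df Xy; apply: sup_upper_bound; [exact: has_sup_star Xy | exists y]. Qed.

Lemma star_le_add f g c x : dominates_dist g ->
  (forall y, X y -> g y <= f y + c) -> star f x <= star g x + c.
Proof.
move=> Dg gf; apply: ge_sup; first by exists (`|x - x0| - f x0); exists x0.
by move=> _ [y Xy <-]; have := star_ge x Dg Xy; have := gf y Xy; lra.
Qed.

Lemma star_le f x : dominates_dist f -> X x -> star f x <= f x.
Proof.
move=> Df Xx; apply: ge_sup; first by exists (`|x - x| - f x); exists x.
by move=> _ [y Xy <-]; have := Df x y Xx Xy; lra.
Qed.

Lemma star_lipschitz f x x' : dominates_dist f -> star f x <= star f x' + `|x - x'|.
Proof.
move=> Df; apply: ge_sup; first by exists (`|x - x0| - f x0); exists x0.
move=> _ [y Xy <-]; have := star_ge x' Df Xy.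
by have := ler_distD x' x y; lra.
Qed.

Lemma eq_star f g x : (forall y, X y -> f y = g y) -> star f x = star g x.
Proof.
move=> fg; congr sup; apply/seteqP.
by split=> _ [y Xy <-]; exists y => //; rewrite fg.
Qed.

Lemma dominates_mid_star f : dominates_dist f -> dominates_dist (mid_star f).
Proof.
move=> Df x y Xx Xy; rewrite /mid_star.
by have := star_ge x Df Xy; have := star_ge y Df Xx; rewrite (distrC y x); lra.
Qed.

Lemma mid_star_le f x : dominates_dist f -> X x -> mid_star f x <= f x.
Proof. by move=> Df Xx; have := star_le Df Xx; rewrite /mid_star; lra. Qed.

Lemma dist_mid_star f g c x : dominates_dist f -> dominates_dist g -> X x ->
  (forall y, X y -> `|f y - g y| <= c) -> `|mid_star f x - mid_star g x| <= c.
Proof.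
move=> Df Dg Xx fg.
have fg' y : X y -> g y <= f y + c /\ f y <= g y + c.
  by move=> Xy; have := fg y Xy; rewrite ler_norml => /andP[? ?]; split; lra.
have := star_le_add x Dg (fun y Xy => (fg' y Xy).1).
have := star_le_add x Df (fun y Xy => (fg' y Xy).2).
by have := fg' x Xx; rewrite /mid_star ler_norml => -[? ?] ? ?; apply/andP; split; lra.
Qed.

Lemma dominates_mid_star_iter p k : dominates_dist (mid_star_iter p k).
Proof.
elim: k => [x y _ _|k IH]; last exact: dominates_mid_star.
by rewrite /mid_star_iter /= (distrC y p); apply: ler_distD.
Qed.

Lemma mid_star_iterS p k : mid_star_iter p k.+1 = mid_star (mid_star_iter p k).
Proof. by []. Qed.

Lemma mid_star_iter_nonincreasing p x : X x -> nonincreasing_seq (mid_star_iter p ^~ x).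
Proof.
move=> Xx; apply/nonincreasing_seqP => k.
exact: mid_star_le (dominates_mid_star_iter p k) Xx.
Qed.

Lemma dist_mid_star_iter p q k x : X x ->
  `|mid_star_iter p k x - mid_star_iter q k x| <= `|p - q|.
Proof.
elim: k x => [|k IH] x Xx; first exact: ler_dist_distB.
by apply: dist_mid_star => //; apply: dominates_mid_star_iter.
Qed.

Lemma has_inf_mid_star_iter p x : X x -> has_inf (range (mid_star_iter p ^~ x)).
Proof.
move=> Xx; split; first by exists (mid_star_iter p 0 x); exists 0%N.
by exists 0 => _ [k _ <-]; apply: dominates_dist_ge0 Xx; apply: dominates_mid_star_iter.
Qed.

Lemma extremal_le p k x : X x -> extremal p x <= mid_star_iter p k x.
Proof. by move=> Xx; apply: ge_inf; [case: (has_inf_mid_star_iter p Xx) | exists k]. Qed.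

Lemma extremal_adherent p x e : X x -> 0 < e ->
  exists k, mid_star_iter p k x < extremal p x + e.
Proof.
move=> Xx e_gt0.
by have [_ [k _ <-]] := inf_adherent e_gt0 (has_inf_mid_star_iter p Xx); exists k.
Qed.

Lemma dist_extremal p q x : X x -> `|extremal p x - extremal q x| <= `|p - q|.
Proof.
have le_add p' q' : X x -> extremal p' x <= extremal q' x + `|p' - q'|.
  move=> Xx; rewrite -lerBlDr; apply: lb_le_inf.
    by exists (mid_star_iter q' 0 x); exists 0%N.
  move=> _ [k _ <-]; have := extremal_le p' k Xx.
  have := dist_mid_star_iter p' q' k Xx.
  by rewrite ler_norml => /andP[? ?]; lra.
move=> Xx; rewrite ler_norml.
have := le_add p q Xx; have := le_add q p Xx; rewrite (distrC q).
by move=> ? ?; apply/andP; split; lra.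
Qed.

Lemma dominates_extremal p : dominates_dist (extremal p).
Proof.
move=> x y Xx Xy; apply/ler_addgt0Pr => e e_gt0.
have e2_gt0 : 0 < e / 2 by rewrite divr_gt0.
have [k xk] := extremal_adherent p Xx e2_gt0.
have [m ym] := extremal_adherent p Xy e2_gt0.
have := dominates_mid_star_iter p (maxn k m) Xx Xy.
have := mid_star_iter_nonincreasing p Xx (leq_maxl k m).
have := mid_star_iter_nonincreasing p Xy (leq_maxr k m).
lra.
Qed.

Lemma star_extremal p x : X x -> star (extremal p) x = extremal p x.
Proof.
move=> Xx; apply/le_anti/andP; split; first exact: star_le (dominates_extremal p) Xx.
apply/ler_addgt0Pr => e e_gt0; have [k xk] := extremal_adherent p Xx e_gt0.
have : star (mid_star_iter p k) x <= star (extremal p) x + 0.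
  apply: star_le_add (dominates_extremal p) _ => y Xy.
  by rewrite addr0; apply: extremal_le.
by have := extremal_le p k.+1 Xx; rewrite mid_star_iterS /mid_star; lra.
Qed.

Lemma extremal_attained p x : compact X -> X x ->
  exists2 y, X y & `|x - y| = extremal p x + extremal p y.
Proof.
move=> cX Xx; have Dp := dominates_extremal p.
pose h y := `|x - y| - star (extremal p) y.
have h_cont : continuous h.
  apply: (@lipschitz_continuous _ _ _ h 2) => // u v.
  have := star_lipschitz u v Dp; have := star_lipschitz v u Dp.
  have := ler_dist_distB x u v; rewrite (distrC v u) /h !ler_norml.
  by move=> /andP[? ?] ? ?; apply/andP; split; lra.
have [|c /set_mem Xc c_max] := compact_EVT_max _ cX (continuous_subspaceT h_cont).
  by exists x.
exists c => //; apply/le_anti/andP; split; first exact: Dp.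
(* [extremal p x] is the supremum of [h] over [X], which [c] attains. *)
suff : extremal p x <= `|x - c| - extremal p c by lra.
rewrite -(star_extremal p Xx); apply: ge_sup.
  by exists (`|x - x| - extremal p x); exists x.
by move=> _ [y Xy <-]; have := c_max y (mem_set Xy); rewrite /h !star_extremal.
Qed.

End ExtremalFunctions.

Section Retraction.
Variables (R : realType) (n : nat) (X : set 'rV[R]_n) (x0 : 'rV[R]_n).
Hypothesis X0 : X x0.
Implicit Types (f g : 'rV[R]_n -> R) (x y z p q : 'rV[R]_n).

Definition box_lo f k := sup [set x ord0 k - f x | x in X].

Definition box_hi f k := inf [set x ord0 k + f x | x in X].

Definition clamp_box f p : 'rV[R]_n :=
  \row_k Num.max (box_lo f k) (Num.min (box_hi f k) (p ord0 k)).

Lemma has_sup_box_lo f k : dominates_dist X f -> has_sup [set x ord0 k - f x | x in X].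
Proof.
move=> Df; split; first by exists (x0 ord0 k - f x0); exists x0.
exists (x0 ord0 k + f x0) => _ [x Xx <-].
by have := Df x x0 Xx X0; have := row_entryB_le x x0 k; lra.
Qed.

Lemma has_inf_box_hi f k : dominates_dist X f -> has_inf [set x ord0 k + f x | x in X].
Proof.
move=> Df; split; first by exists (x0 ord0 k + f x0); exists x0.
exists (x0 ord0 k - f x0) => _ [x Xx <-].
by have := Df x0 x X0 Xx; have := row_entryB_le x0 x k; lra.
Qed.

Lemma box_lo_ge f k x : dominates_dist X f -> X x -> x ord0 k - f x <= box_lo f k.
Proof. by move=> Df Xx; apply: sup_upper_bound; [exact: has_sup_box_lo | exists x]. Qed.

Lemma box_hi_le f k x : dominates_dist X f -> X x -> box_hi f k <= x ord0 k + f x.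
Proof. by move=> Df Xx; apply: ge_inf; [case: (has_inf_box_hi k Df) | exists x]. Qed.

Lemma box_lo_le_hi f k : dominates_dist X f -> box_lo f k <= box_hi f k.
Proof.
move=> Df; apply: ge_sup; first by exists (x0 ord0 k - f x0); exists x0.
move=> _ [x Xx <-]; apply: lb_le_inf; first by exists (x0 ord0 k + f x0); exists x0.
by move=> _ [y Xy <-]; have := Df x y Xx Xy; have := row_entryB_le x y k; lra.
Qed.

Lemma box_lo_le_add f g c k : dominates_dist X g ->
  (forall x, X x -> g x <= f x + c) -> box_lo f k <= box_lo g k + c.
Proof.
move=> Dg gf; apply: ge_sup; first by exists (x0 ord0 k - f x0); exists x0.
by move=> _ [x Xx <-]; have := box_lo_ge k Dg Xx; have := gf x Xx; lra.
Qed.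

Lemma box_hi_le_add f g c k : dominates_dist X f ->
  (forall x, X x -> f x <= g x + c) -> box_hi f k <= box_hi g k + c.
Proof.
move=> Df fg; rewrite -lerBlDr; apply: lb_le_inf.
  by exists (x0 ord0 k + g x0); exists x0.
by move=> _ [x Xx <-]; have := box_hi_le k Df Xx; have := fg x Xx; lra.
Qed.

Lemma dist_clamp_box f p x : dominates_dist X f -> X x -> `|x - clamp_box f p| <= f x.
Proof.
move=> Df Xx; apply: row_norm_le => [|k]; first exact: dominates_dist_ge0 Df Xx.
have := box_lo_ge k Df Xx; have := box_hi_le k Df Xx; have lo_hi := box_lo_le_hi k Df.
rewrite !mxE ler_norml; set c := Num.max _ _.
have lo_c : box_lo f k <= c by rewrite le_max lexx.
have c_hi : c <= box_hi f k by rewrite ge_max lo_hi ge_min lexx.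
by move=> ? ?; apply/andP; split; lra.
Qed.

Lemma clamp_box_lipschitz f g p q : dominates_dist X f -> dominates_dist X g ->
  (forall x, X x -> `|f x - g x| <= `|p - q|) ->
  `|clamp_box f p - clamp_box g q| <= `|p - q|.
Proof.
move=> Df Dg fg; apply: row_norm_le => // k; rewrite !mxE.
have fg' x : X x -> g x <= f x + `|p - q| /\ f x <= g x + `|p - q|.
  by move=> Xx; have := fg x Xx; rewrite ler_norml => /andP[? ?]; split; lra.
have := box_lo_le_add k Dg (fun x Xx => (fg' x Xx).1).
have := box_lo_le_add k Df (fun x Xx => (fg' x Xx).2).
have := box_hi_le_add k Df (fun x Xx => (fg' x Xx).2).
have := box_hi_le_add k Dg (fun x Xx => (fg' x Xx).1).
have := row_entry_le_norm (p - q) k; rewrite !mxE => pq ? ? ? ?.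
apply: dist_max_le; first by rewrite ler_norml; apply/andP; split; lra.
by apply: dist_min_le => //; rewrite ler_norml; apply/andP; split; lra.
Qed.

Lemma clamp_box_id f z : (forall x, X x -> `|x - z| <= f x) -> clamp_box f z = z.
Proof.
move=> zf; apply/rowP => k; rewrite mxE.
have lo_le : box_lo f k <= z ord0 k.
  apply: ge_sup; first by exists (x0 ord0 k - f x0); exists x0.
  by move=> _ [x Xx <-]; have := zf x Xx; have := row_entryB_le x z k; lra.
have le_hi : z ord0 k <= box_hi f k.
  apply: lb_le_inf; first by exists (x0 ord0 k + f x0); exists x0.
  move=> _ [x Xx <-]; have := zf x Xx; rewrite distrC.
  by have := row_entryB_le z x k; lra.
by rewrite min_r // max_r.
Qed.

Definition Emin_retract p := clamp_box (extremal X p) p.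

Lemma Emin_retract_in p : compact X -> Emin X (Emin_retract p).
Proof.
move=> cX x Xx; have [y Xy xy] := extremal_attained X0 p cX Xx; exists y; split=> //.
have Dp := dominates_extremal (X := X) p.
have := dist_clamp_box p Dp Xx; have := dist_clamp_box p Dp Xy.
have := ler_distD (Emin_retract p) x y; rewrite /dinf (distrC y) => ? ? ?.
by apply/le_anti/andP; split; lra.
Qed.

Lemma Emin_retract_lipschitz p q : `|Emin_retract p - Emin_retract q| <= `|p - q|.
Proof.
have Dp := dominates_extremal (X := X).
apply: clamp_box_lipschitz (Dp p) (Dp q) _ => x Xx.
exact: dist_extremal X0 _ _ _ Xx.
Qed.

Lemma extremal_Emin z x : Emin X z -> X x -> extremal X z x = `|x - z|.
Proof.
move=> Ez; have Dz := dominates_mid_star_iter (X := X) z 0.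
have star_dist y : X y -> star X (mid_star_iter X z 0) y = `|y - z|.
  move=> Xy; apply/le_anti/andP; split; first exact: star_le Dz Xy.
  have [w [Xw]] := Ez y Xy; rewrite /dinf (distrC z w) => yzw.
  by have := star_ge y Dz Xw; rewrite /mid_star_iter /=; lra.
have iter_dist k y : X y -> mid_star_iter X z k y = `|y - z|.
  elim: k y => [//|k IH] y Xy.
  by rewrite mid_star_iterS /mid_star (eq_star _ IH) star_dist // IH //; lra.
move=> Xx; apply/le_anti/andP; split; first exact: (extremal_le z 0 Xx).
apply: lb_le_inf; first by exists (mid_star_iter X z 0 x); exists 0%N.
by move=> _ [k _ <-]; rewrite iter_dist.
Qed.

Lemma Emin_retract_id z : Emin X z -> Emin_retract z = z.
Proof. by move=> Ez; apply: clamp_box_id => x Xx; rewrite extremal_Emin. Qed.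

End Retraction.

Lemma Emin_set0 (R : realType) (n : nat) : Emin (@set0 'rV[R]_n) = [set: 'rV[R]_n].
Proof. by apply/seteqP; split=> // z _ x. Qed.

Lemma Emin_injective_space (R : realType) (n : nat) (X : set 'rV[R]_n) :
  compact X -> injective_space (Emin X).
Proof.
have [->|/set0P[x0 X0] cX] := eqVneq X set0.
  by rewrite Emin_set0 => _; apply: injective_space_setT.
apply: (retract_injective_space (r := Emin_retract X) (@injective_space_setT R n)) => //.
- by move=> p _; apply: Emin_retract_in X0 _ cX.
- by move=> p q _ _; exact: Emin_retract_lipschitz X0 p q.
- exact: Emin_retract_id X0.
Qed.

Theorem proposition5p15 (R : realType) (n : nat) :
  (forall Q : set 'rV[R]_n, compact Q -> (injective_space Q <-> Q = Emin Q)) /\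
  (forall X : set 'rV[R]_n, compact X -> injective_space (Emin X)).
Proof.
split; last exact: Emin_injective_space.
move=> Q cQ; split; first exact: injective_space_Emin_eq.
by move=> QE; rewrite QE; apply: Emin_injective_space.
Qed.
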